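(* For every finite $\sigma$-structure $\mathscr{A}$, $\mathsf{tw}(\mathscr{A})=\kappa^{\mathbb{P}}(\mathscr{A})-1$.
   Context: Let $\mathbf{k}=\{1,\dots,k\}$, $k\ge1$. $\mathbb{P}_k\mathscr{A}$ has universe $(\mathbf{k}\times A)^+$ (non-empty finite sequences $[(p_1,a_1),\dots,(p_n,a_n)]$); $\varepsilon$ gives the $A$-component of the last move; for $n$-ary $R$, $R^{\mathbb{P}_k\mathscr{A}}(s_1,\dots,s_n)$ iff the $s_i$ are pairwise prefix-comparable, for each $i$ the pebble index of the last move of $s_i$ does not occur in the suffix of $s_i$ in any $s_j\sqsupseteq s_i$, and $R^{\mathscr{A}}(\varepsilon s_1,\dots,\varepsilon s_n)$. Comultiplication: $\delta[(p_1,a_1),\dots,(p_j,a_j)]=[(p_1,s_1),\dots,(p_j,s_j)]$ where $s_i=[(p_1,a_1),\dots,(p_i,a_i)]$; functor action: $\mathbb{P}_k h[(p_1,a_1),\dots,(p_j,a_j)]=[(p_1,h(a_1)),\dots,(p_j,h(a_j))]$. A $\mathbb{P}_k$-coalgebra on $\mathscr{A}$ is a homomorphism $\alpha:\mathscr{A}\to\mathbb{P}_k\mathscr{A}$ with $\delta\circ\alpha=\mathbb{P}_k\alpha\circ\alpha$ and $\varepsilon\circ\alpha=\mathrm{id}$; $\kappa^{\mathbb{P}}(\mathscr{A})$ is the least $k$ for which one exists. $\mathsf{tw}(\mathscr{A})$ is the tree-width of the Gaifman graph $\mathcal{G}(\mathscr{A})=(A,\frown)$ ($a\frown a'$ iff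 $a\ne a'$ occur in a common tuple of some relation), i.e. the minimum over tree decompositions $(T,\le,\lambda)$ of $\max_x|\lambda(x)|-1$, where a tree decomposition is a rooted tree $T$ with $\lambda:T\to\mathscr{P}(A)$ such that every vertex is in some bag, adjacent vertices share a bag, and the bags containing any given vertex form a connected set (contain every node on the tree path between two of them). *)

From HB Require Import structures.
From mathcomp Require Import all_boot.
Set Implicit Arguments. Unset Strict Implicit. Unset Printing Implicit Defensive.

(** A relational signature is given by a type of symbols [S] with arities
    [ar : S -> nat]; a finite sigma-structure is a finType [A] together with
    interpretations [R s : pred ((ar s).-tuple A)]. *)

Definition neseq (T : Type) := (T * seq T)%type.
Definition ne_list T (u : neseq T) : seq T := u.1 :: u.2.

(** Universe of P_k T: non-empty sequences of moves (p, a), p : 'I_k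
    (pebble indices {1..k} represented as {0..k-1}). *)
Definition Pk (k : nat) (T : Type) := neseq ('I_k * T).

Definition eps k T (u : Pk k T) : T := (last u.1 u.2).2.

Definition last_peb k T (u : Pk k T) : 'I_k := (last u.1 u.2).1.

(** comultiplication: [(p1,a1),..,(pj,aj)] |-> [(p1,s1),..,(pj,sj)],
    s_i the prefix of length i *)
Definition delta k T (u : Pk k T) : Pk k (Pk k T) :=
  let x := u.1 in let s := u.2 in
  ((x.1, (x, [::])),
   [seq ((nth x s i).1, (x, take i.+1 s)) | i <- iota 0 (size s)]).

Definition Pmap k T U (h : T -> U) (u : Pk k T) : Pk k U :=
  let f := fun pa : 'I_k * T => (pa.1, h pa.2) in (f u.1, map f u.2).

Definition PRel k (T : eqType) n (Rel : pred (n.-tuple T))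
    (u : n.-tuple (Pk k T)) : bool :=
  [forall i : 'I_n, forall j : 'I_n,
     prefix (ne_list (tnth u i)) (ne_list (tnth u j))
     || prefix (ne_list (tnth u j)) (ne_list (tnth u i))]
  && [forall i : 'I_n, forall j : 'I_n,
     prefix (ne_list (tnth u i)) (ne_list (tnth u j)) ==>
     (last_peb (tnth u i)
        \notin map fst (drop (size (ne_list (tnth u i))) (ne_list (tnth u j))))]
  && Rel (map_tuple (@eps k T) u).

Section Structures.
Variables (S : Type) (ar : S -> nat) (A : finType)
          (R : forall s : S, pred ((ar s).-tuple A)).

Definition is_Pk_coalgebra k (alpha : A -> Pk k A) : Prop :=
  (forall (s : S) (t : (ar s).-tuple A),
      R t -> PRel (@R s) (map_tuple alpha t))
  /\ (forall a, delta (alpha a) = Pmap alpha (alpha a))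
  /\ (forall a, eps (alpha a) = a).

Definition has_Pk_coalgebra k : Prop :=
  exists alpha : A -> Pk k A, is_Pk_coalgebra alpha.

Definition is_kappaP (n : nat) : Prop :=
  0 < n /\ has_Pk_coalgebra n /\
  (forall m, 0 < m -> has_Pk_coalgebra m -> n <= m).

Definition gaifman (a b : A) : Prop :=
  a != b /\ exists (s : S) (t : (ar s).-tuple A), R t /\ a \in t /\ b \in t.

(** rooted tree given as a finite tree order (root least, downsets chains) *)
Definition tree_order (T : finType) (le : rel T) : Prop :=
  reflexive le /\ antisymmetric le /\ transitive le
  /\ (exists r, forall x, le r x)
  /\ (forall x y z, le y x -> le z x -> le y z || le z y).

Definition on_path (T : finType) (le : rel T) (x y z : T) : bool :=
  (le z x || le z y) && [forall w, le w x ==> le w y ==> le w z].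

Definition tree_dec (T : finType) (le : rel T) (lam : T -> {set A}) : Prop :=
  tree_order le
  /\ (forall a, exists x, a \in lam x)
  /\ (forall a b, gaifman a b -> exists x, (a \in lam x) && (b \in lam x))
  /\ (forall a x y z, a \in lam x -> a \in lam y -> on_path le x y z ->
        a \in lam z).

Definition width (T : finType) (lam : T -> {set A}) : nat :=
  (\max_(x : T) #|lam x|) - 1.

Definition is_tw (n : nat) : Prop :=
  (exists (T : finType) (le : rel T) (lam : T -> {set A}),
      tree_dec le lam /\ width lam = n)
  /\ (forall (T : finType) (le : rel T) (lam : T -> {set A}),
        tree_dec le lam -> n <= width lam).

End Structures.

From HB Require Import structures.
From mathcomp Require Import all_boot zify.
From Stdlib Require Import Classical.
Set Implicit Arguments. Unset Strict Implicit. Unset Printing Implicit Defensive.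

(* A coalgebra [alpha] orders [A] by prefixes of the plays [alpha a]; this is
   a forest order, and taking as bag of [b] the elements whose pebble is still
   in place at the end of the play of [b] gives a tree decomposition.  Distinct
   elements of a bag carry distinct pebbles, so bags have at most [k] elements.
   Conversely, given a decomposition with bags of size at most [k], order [A]
   by the tree order of the topmost bag of each element (breaking ties
   arbitrarily), pick pebbles greedily so that no element reuses the pebble of
   an earlier element of its topmost bag, and let [alpha a] be the sequence of
   pebbled elements below [a].  If [c] precedes [d] and both lie in a common
   bag, connectivity puts [c] into the topmost bag of every element between
   them, so none of those moves the pebble of [c]. *)

Lemma prefix_total (T : eqType) (s1 s2 s : seq T) :
  prefix s1 s -> prefix s2 s -> prefix s1 s2 || prefix s2 s1.
Proof.
rewrite [prefix s1 s]prefixE [prefix s2 s]prefixE => /eqP <- /eqP <-.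
move: (size s1) (size s2) => n1 n2.
case: (leqP n1 n2) => [le12 | /ltnW le21].
  by rewrite -(take_takel s le12) prefix_take.
by rewrite -(take_takel s le21) prefix_take orbT.
Qed.

Lemma prefix_antisym (T : eqType) (s1 s2 : seq T) :
  prefix s1 s2 -> prefix s2 s1 -> s1 = s2.
Proof.
move=> p12 p21; move: (p12); rewrite prefixE => /eqP <-.
by rewrite take_oversize // size_prefix.
Qed.

Lemma prefix_map (T U : eqType) (f : T -> U) (s1 s2 : seq T) :
  prefix s1 s2 -> prefix (map f s1) (map f s2).
Proof. by move=> /prefixP[r ->]; rewrite map_cat prefix_prefix. Qed.

Lemma prefix_drop (T : eqType) n (s1 s2 : seq T) :
  prefix s1 s2 -> prefix (drop n s1) (drop n s2).
Proof.
move=> /prefixP[r ->]; rewrite drop_cat; case: ltnP => [_|le_s1n].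
  exact: prefix_prefix.
by rewrite drop_oversize // prefix0s.
Qed.

Lemma mem_last_suffix (T : eqType) (x y : T) (s s1 s2 : seq T) :
  x :: s = s1 ++ y :: s2 -> last x s \in y :: s2.
Proof.
case: s1 => [|z s1] /= [-> ->]; first exact: mem_last.
by rewrite last_cat /=; apply: mem_last.
Qed.

Lemma ne_list_eq (T : Type) (u : neseq T) x s : ne_list u = x :: s -> u = (x, s).
Proof. by case: u => y t /= [-> ->]. Qed.

Section CoalgebraDecomposition.
Variables (S : Type) (ar : S -> nat) (A : finType)
          (R : forall s : S, pred ((ar s).-tuple A)).
Variables (k : nat) (alpha : A -> Pk k A).
Hypothesis alpha_coalg : is_Pk_coalgebra R alpha.

Definition play a := ne_list (alpha a).
Arguments play : simpl never.
Definition peb a := last_peb (alpha a).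

(* The move placing [a] occurs in the play of [b], and its pebble is never
   moved again there. *)
Definition pebble_live a b :=
  prefix (play a) (play b) && (peb a \notin map fst (drop (size (play a)) (play b))).

Definition play_le (x y : option A) : bool :=
  match x, y with
  | None, _ => true
  | Some _, None => false
  | Some a, Some b => prefix (play a) (play b)
  end.

Definition live_bag (x : option A) : {set A} :=
  if x is Some b then [set a | pebble_live a b] else set0.

Lemma play_inj : injective play.
Proof.
move=> a b e; have [_ [_ eps_alpha]] := alpha_coalg.
rewrite -(eps_alpha a) -(eps_alpha b); congr eps.
by rewrite [alpha a]surjective_pairing (ne_list_eq (esym e)).
Qed.

Lemma pebble_live_refl a : pebble_live a a.
Proof. by rewrite /pebble_live prefix_refl drop_size. Qed.

Lemma pebble_live_prefix a b d : pebble_live a b ->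
  prefix (play a) (play d) -> prefix (play d) (play b) -> pebble_live a d.
Proof.
move=> /andP[_ free_ab] ad /(prefix_drop (size (play a))) /prefixP[r db].
by rewrite /pebble_live ad; apply: contra free_ab; rewrite db map_cat mem_cat => ->.
Qed.

Lemma pebble_live_peb_neq a a' b : pebble_live a b -> pebble_live a' b ->
  prefix (play a) (play a') -> a != a' -> peb a != peb a'.
Proof.
move=> /andP[_ free_ab] /andP[/prefixP[r e_b] _] /prefixP[[|y q] e_a'] neq_aa'.
  by rewrite -(play_inj (etrans e_a' (cats0 _))) eqxx in neq_aa'.
apply: contra free_ab => /eqP ->.
have last_a' := mem_last_suffix (etrans (erefl (play a')) e_a').
by rewrite e_b e_a' -catA drop_size_cat // map_cat mem_cat (map_f fst last_a').
Qed.

Lemma card_live_bag x : #|live_bag x| <= k.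
Proof.
case: x => [b|]; last by rewrite cards0.
rewrite -(card_ord k) -(card_in_imset (f := peb)); first exact: max_card.
move=> a a'; rewrite !inE => live_a live_a' e; apply/eqP; apply: contraT => neq.
have [pa _] := andP live_a; have [pa' _] := andP live_a'.
case/orP: (prefix_total pa pa') => [aa' | a'a].
  by move: (pebble_live_peb_neq live_a live_a' aa' neq); rewrite e eqxx.
by move: (pebble_live_peb_neq live_a' live_a a'a); rewrite eq_sym neq e eqxx => /(_ isT).
Qed.

Lemma play_tree_order : tree_order play_le.
Proof.
split; first by case=> [a|] //; exact: prefix_refl.
split.
  case=> [a|] [b|] // /andP[ab ba]; by congr Some; apply: play_inj; apply: prefix_antisym.
split; first by case=> [b|] [a|] [c|] //; exact: prefix_trans.
split; first by exists None.
case=> [a|] [b|] [c|] //; first exact: prefix_total.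
all: by rewrite /= orbT.
Qed.

Lemma related_pebble_live s (t : (ar s).-tuple A) a b : R t -> a \in t -> b \in t ->
  (prefix (play a) (play b) || prefix (play b) (play a)) /\
  (prefix (play a) (play b) -> pebble_live a b).
Proof.
move=> Rt /tnthP[i ->] /tnthP[j ->]; have [hom _] := alpha_coalg.
move: (hom s t Rt) => /andP[/andP[/forallP comparable /forallP free] _].
move: (forallP (comparable i) j) (forallP (free i) j); rewrite !tnth_map => comp /implyP live.
by split=> // pij; rewrite /pebble_live pij live.
Qed.

Lemma live_tree_dec : tree_dec R play_le live_bag.
Proof.
split; first exact: play_tree_order.
split; first by move=> a; exists (Some a); rewrite inE pebble_live_refl.
split.
  move=> a b [_ [s [t [Rt [ta tb]]]]].
  have [/orP[ab | ba] live_ab] := related_pebble_live Rt ta tb.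
    by exists (Some b); rewrite !inE live_ab // pebble_live_refl.
  have [_ live_ba] := related_pebble_live Rt tb ta.
  by exists (Some a); rewrite !inE live_ba // pebble_live_refl.
move=> a [b|] [c|] [d|] //; rewrite ?inE // => live_ab live_ac.
  move=> /andP[db_or_dc /forallP below].
  have ad : prefix (play a) (play d).
    by move/implyP: (below (Some a)) => /(_ (andP live_ab).1)/implyP/(_ (andP live_ac).1).
  by case/orP: db_or_dc; [apply: pebble_live_prefix live_ab ad | apply: pebble_live_prefix live_ac ad].
move=> /andP[_ /forallP below].
by move/implyP: (below (Some a)) => /(_ (andP live_ab).1)/implyP/(_ (andP live_ac).1).
Qed.

Lemma width_live_bag : width live_bag <= k.-1.
Proof. by rewrite /width -subn1 leq_sub2r //; apply/bigmax_leqP => x _; apply: card_live_bag. Qed.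

End CoalgebraDecomposition.

Section DecompositionCoalgebra.
Variables (S : Type) (ar : S -> nat) (A : finType)
          (R : forall s : S, pred ((ar s).-tuple A)).
Variables (T : finType) (le : rel T) (lam : T -> {set A}) (root : T) (k : nat).
Hypothesis dec : tree_dec R le lam.
Hypothesis le_root : forall x, le root x.
Hypothesis card_bag : forall x, #|lam x| <= k.
Hypothesis k_gt0 : 0 < k.

Lemma tree_refl : reflexive le. Proof. by case: dec => [[]]. Qed.
Lemma tree_anti : antisymmetric le. Proof. by case: dec => [[_ []]]. Qed.
Lemma tree_trans : transitive le. Proof. by case: dec => [[_ [_ []]]]. Qed.
Lemma tree_chain x y z : le y x -> le z x -> le y z || le z y.
Proof. by case: dec => [[_ [_ [_ [_ chain]]]] _]; apply: chain. Qed.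
Lemma bag_cover a : exists x, a \in lam x. Proof. by case: dec => [_ []]. Qed.
Lemma bag_edge a b : gaifman R a b -> exists x, (a \in lam x) && (b \in lam x).
Proof. by case: dec => [_ [_ [edge _]]]; apply: edge. Qed.
Lemma bag_path a x y z : a \in lam x -> a \in lam y -> on_path le x y z -> a \in lam z.
Proof. by case: dec => [_ [_ [_ path]]]; apply: path. Qed.

Definition depth x := #|[set w | le w x]|.

Lemma depth_lt x y : le x y -> x != y -> depth x < depth y.
Proof.
move=> le_xy neq_xy; apply/proper_card/properP; split.
  by apply/subsetP => w; rewrite !inE => le_wx; apply: tree_trans le_wx le_xy.
exists y; rewrite !inE ?tree_refl //; apply: contra neq_xy => le_yx.
by apply/eqP/tree_anti; rewrite le_xy le_yx.
Qed.

Lemma tree_meet x y : exists m, [/\ le m x, le m y & on_path le x y m].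
Proof.
have root_xy : le root x && le root y by rewrite !le_root.
case: (@arg_maxnP _ root (fun w => le w x && le w y) depth root_xy) => m /andP[mx my] deepest.
exists m; split; rewrite // /on_path mx /=.
apply/forallP => w; apply/implyP => wx; apply/implyP => wy.
case/orP: (tree_chain wx mx) => // mw; have [-> | neq_mw] := eqVneq m w.
  exact: tree_refl.
by have := deepest w; rewrite wx wy => /(_ isT) /=; rewrite leqNgt (depth_lt mw neq_mw).
Qed.

Definition some_bag a := odflt root [pick x | a \in lam x].

Lemma mem_some_bag a : a \in lam (some_bag a).
Proof.
rewrite /some_bag; case: pickP => [x | none] //=.
by have [x ax] := bag_cover a; rewrite none in ax.
Qed.

Definition top a := [arg min_(x < some_bag a | a \in lam x) depth x].

Lemma mem_top a : a \in lam (top a).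
Proof. by rewrite /top; case: arg_minnP; first exact: mem_some_bag. Qed.

Lemma top_min a y : a \in lam y -> le (top a) y.
Proof.
move=> ay; have [m [mt my path_m]] := tree_meet (top a) y.
have am := bag_path (mem_top a) ay path_m.
have [<- // | neq_mt] := eqVneq m (top a).
move: (depth_lt mt neq_mt); rewrite /top; case: arg_minnP; first exact: mem_some_bag.
by move=> t _ min_t; rewrite ltnNge min_t.
Qed.

Definition prec a b :=
  if top a == top b then enum_rank a < enum_rank b else le (top a) (top b).
Definition preceq a b := (a == b) || prec a b.

Lemma prec_irr a : prec a a = false.
Proof. by rewrite /prec eqxx ltnn. Qed.

Lemma prec_trans : transitive prec.
Proof.
move=> b a c; rewrite /prec.
have [ab | nab] := eqVneq (top a) (top b); have [bc | nbc] := eqVneq (top b) (top c).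
- by rewrite ab bc eqxx; apply: ltn_trans.
- by rewrite ab (negbTE nbc).
- by rewrite -bc (negbTE nab).
move=> le_ab le_bc; have [ac | _] := eqVneq (top a) (top c); last exact: tree_trans le_ab le_bc.
by move: nab; rewrite (@tree_anti (top a) (top b)) ?eqxx // le_ab ac le_bc.
Qed.

Lemma preceq_refl : reflexive preceq. Proof. by move=> a; rewrite /preceq eqxx. Qed.

Lemma preceq_trans : transitive preceq.
Proof.
move=> b a c; rewrite /preceq; have [-> //|_ /= ab] := eqVneq a b.
have [<- | _ /= bc] := eqVneq b c; first by rewrite ab orbT.
by rewrite (prec_trans ab bc) orbT.
Qed.

Lemma preceq_anti : antisymmetric preceq.
Proof.
move=> a b; rewrite /preceq; have [//|_ /andP[ab ba]] := eqVneq a b.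
by have := prec_trans ab ba; rewrite prec_irr.
Qed.

Lemma preceq_top a b : preceq a b -> le (top a) (top b).
Proof.
rewrite /preceq /prec; have [-> _|_ /=] := eqVneq a b; first exact: tree_refl.
by have [-> _|] := eqVneq (top a) (top b); first exact: tree_refl.
Qed.

Lemma preceq_total_below a b y : le (top a) y -> le (top b) y -> preceq a b || preceq b a.
Proof.
move=> top_a top_b; rewrite /preceq /prec eq_sym [top b == _]eq_sym.
have [_ | _] := eqVneq (top a) (top b).
  case: (ltngtP (enum_rank a) (enum_rank b)) => [||/val_inj/enum_rank_inj ->];
  by rewrite ?eqxx ?orbT.
by case/orP: (tree_chain top_a top_b) => ->; rewrite ?orbT.
Qed.

Lemma preceq_chain a b c : preceq a c -> preceq b c -> preceq a b || preceq b a.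
Proof. by move=> /preceq_top ac /preceq_top bc; apply: preceq_total_below ac bc. Qed.

Lemma mem_top_prec c e x : c \in lam x -> le (top e) x -> preceq c e -> c \in lam (top e).
Proof.
move=> cx ex /preceq_top ce; apply: bag_path (mem_top c) cx _.
rewrite /on_path ex orbT; apply/forallP => w; apply/implyP => wc; apply/implyP => _.
exact: tree_trans wc ce.
Qed.

Definition rank c := #|[set a | prec a c]|.

Lemma rank_lt a c : prec a c -> rank a < rank c.
Proof.
move=> ac; apply/proper_card/properP; split.
  by apply/subsetP => w; rewrite !inE => wa; apply: prec_trans wa ac.
by exists a; rewrite !inE ?prec_irr.
Qed.

Definition admissible (p : A -> 'I_k) :=
  forall a c, prec a c -> a \in lam (top c) -> p a != p c.

Lemma card_earlier_in_top c : #|[set a | prec a c & a \in lam (top c)]| < k.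
Proof.
have sub : [set a | prec a c & a \in lam (top c)] \subset lam (top c) :\ c.
  apply/subsetP => a; rewrite !inE => /andP[ac ->]; rewrite andbT.
  by apply: contraTneq ac => ->; rewrite prec_irr.
apply: leq_ltn_trans (subset_leq_card sub) _.
by have := cardsD1 c (lam (top c)); rewrite mem_top; have := card_bag (top c); lia.
Qed.

Lemma exists_pebble_notin (X : {set 'I_k}) : #|X| < k -> exists i, i \notin X.
Proof.
move=> small_X; have : 0 < #|~: X| by have := cardsC X; rewrite card_ord; lia.
by case/card_gt0P => i; rewrite inE; exists i.
Qed.

(* Greedy colouring along [prec], by induction on the rank. *)
Lemma exists_admissible : exists p : A -> 'I_k, admissible p.
Proof.
suff [p ok] : exists p : A -> 'I_k,
    forall a c, rank c < #|A|.+1 -> prec a c -> a \in lam (top c) -> p a != p c.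
  by exists p => a c; apply: ok; rewrite ltnS /rank max_card.
elim: #|A|.+1 => [|n [p IH]]; first by exists (fun _ => Ordinal k_gt0).
pose used c := [set p a | a in [set a | prec a c & a \in lam (top c)]].
have fresh c : exists i, i \notin used c.
  exact/exists_pebble_notin/(leq_ltn_trans (leq_imset_card _ _))/card_earlier_in_top.
exists (fun c => if rank c == n then xchoose (fresh c) else p c) => a c rc ac a_top.
have /ltn_eqF -> : rank a < n by have := rank_lt ac; lia.
have [_ | ] := eqVneq (rank c) n; last by move=> ?; apply: IH => //; lia.
apply: contraNneq (xchooseP (fresh c)) => <-.
by apply: imset_f; rewrite inE ac.
Qed.

Variable p : A -> 'I_k.
Hypothesis p_admissible : admissible p.

Definition chain a := sort preceq [seq c <- enum A | preceq c a].
Definition move_of c : 'I_k * A := (p c, c).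

Definition pebbling a : Pk k A :=
  let l := map move_of (chain a) in (head (move_of a) l, behead l).

Lemma mem_chain a c : (c \in chain a) = preceq c a.
Proof. by rewrite /chain mem_sort mem_filter mem_enum andbT. Qed.

Lemma chain_uniq a : uniq (chain a).
Proof. by rewrite /chain sort_uniq filter_uniq // enum_uniq. Qed.

Lemma chain_sorted a : sorted preceq (chain a).
Proof.
apply: (@sort_sorted_in _ [pred c | preceq c a]); last first.
  by apply/allP => c; rewrite mem_filter => /andP[].
by move=> x y; rewrite !inE; apply: preceq_chain.
Qed.

Lemma size_chain_gt0 a : 0 < size (chain a).
Proof. by case: (chain a) (mem_chain a a) => //; rewrite preceq_refl. Qed.

Lemma ne_list_pebbling a : ne_list (pebbling a) = map move_of (chain a).
Proof. by rewrite /pebbling; case: (chain a) (size_chain_gt0 a). Qed.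

Lemma chain_nth a i : i < size (chain a) -> chain (nth a (chain a) i) = take i.+1 (chain a).
Proof.
move=> lt_i; set c := nth a (chain a) i.
have ca : preceq c a by rewrite -mem_chain mem_nth.
apply: (sorted_eq preceq_trans preceq_anti (chain_sorted c)).
  exact: take_sorted (chain_sorted a).
apply: uniq_perm; [exact: chain_uniq | exact/take_uniq/chain_uniq|] => d.
have sorted_nth := sorted_leq_nth preceq_trans preceq_refl a (chain_sorted a).
rewrite mem_chain; apply/idP/idP => [dc | d_take].
  have da : d \in chain a by rewrite mem_chain (preceq_trans dc ca).
  rewrite in_take // ltnS leqNgt; apply/negP => lt_id.
  have cd : preceq c d.
    by rewrite -[d](nth_index a da); apply: sorted_nth; rewrite ?inE ?index_mem // ltnW.
  have e_dc : d = c by apply: preceq_anti; rewrite dc cd.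
  by move: lt_id; rewrite e_dc index_uniq ?ltnn ?chain_uniq.
have da := mem_take d_take; move: d_take; rewrite in_take // ltnS => le_di.
by rewrite -[d](nth_index a da); apply: sorted_nth; rewrite ?inE ?index_mem.
Qed.

Lemma last_chain a : last a (chain a) = a.
Proof.
have lt_last : (size (chain a)).-1 < size (chain a) by rewrite prednK ?size_chain_gt0.
have := chain_nth lt_last; rewrite prednK ?size_chain_gt0 // take_size nth_last.
set l := last a (chain a) => e; apply: preceq_anti; apply/andP; split.
  by rewrite -mem_chain -e mem_chain preceq_refl.
by rewrite -mem_chain e mem_chain preceq_refl.
Qed.

Lemma last_pebbling a : last (pebbling a).1 (pebbling a).2 = move_of a.
Proof.
have -> : last (pebbling a).1 (pebbling a).2 = last (move_of a) (ne_list (pebbling a)) by [].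
by rewrite ne_list_pebbling last_map last_chain.
Qed.

Lemma eps_pebbling a : eps (pebbling a) = a.
Proof. by rewrite /eps last_pebbling. Qed.

Lemma last_peb_pebbling a : last_peb (pebbling a) = p a.
Proof. by rewrite /last_peb last_pebbling. Qed.

Lemma pebbling_nth a x0 i : i < size (chain a) ->
  ne_list (pebbling (nth x0 (ne_list (pebbling a)) i).2) = take i.+1 (ne_list (pebbling a)).
Proof.
move=> lt_i; have -> : (nth x0 (ne_list (pebbling a)) i).2 = nth a (chain a) i.
  by rewrite ne_list_pebbling (nth_map a).
by rewrite !ne_list_pebbling chain_nth // map_take.
Qed.

Lemma delta_pebbling a : delta (pebbling a) = Pmap pebbling (pebbling a).
Proof.
have size_chain : size (chain a) = size (ne_list (pebbling a)) by rewrite ne_list_pebbling size_map.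
have := fun i => @pebbling_nth a (pebbling a).1 i; rewrite size_chain.
case: (pebbling a) => x s /= prefix_play; rewrite /delta /Pmap /=; congr (_, _).
  by congr (_, _); apply/esym/ne_list_eq; rewrite (prefix_play 0) //= take0.
rewrite -[in RHS](mkseq_nth x s) /mkseq -map_comp; apply/eq_in_map => i.
rewrite mem_iota add0n => lt_is /=; congr (_, _); apply/esym/ne_list_eq.
exact: (prefix_play i.+1).
Qed.

Lemma prefix_chain c d : preceq c d -> prefix (chain c) (chain d).
Proof.
move=> cd; have c_chain : c \in chain d by rewrite mem_chain.
by rewrite -(nth_index d c_chain) chain_nth ?index_mem // prefix_take.
Qed.

Lemma related_comparable s (t : (ar s).-tuple A) c d : R t -> c \in t -> d \in t ->
  exists x, [/\ c \in lam x, d \in lam x & preceq c d || preceq d c].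
Proof.
move=> Rt ct dt; have [<- | neq_cd] := eqVneq c d.
  have [x cx] := bag_cover c; exists x; by rewrite cx preceq_refl.
have [x /andP[cx dx]] := bag_edge (conj neq_cd (ex_intro _ s (ex_intro _ t (conj Rt (conj ct dt))))).
by exists x; rewrite cx dx (preceq_total_below (top_min cx) (top_min dx)).
Qed.

(* Every element [e] placed after [c] in the chain of [d] has [c] in its top
   bag, so admissibility forbids it from taking the pebble of [c]. *)
Lemma pebble_kept c d x : c \in lam x -> d \in lam x -> prefix (chain c) (chain d) ->
  p c \notin map p (drop (size (chain c)) (chain d)).
Proof.
move=> cx dx /prefixP[q e_d]; rewrite e_d drop_size_cat //; apply/mapP => [[e e_q pce]].
have ed : preceq e d by rewrite -mem_chain e_d mem_cat e_q orbT.
have cd : preceq c d by rewrite -mem_chain e_d mem_cat mem_chain preceq_refl.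
have e_notin_c : e \notin chain c.
  by move: (chain_uniq d); rewrite e_d cat_uniq => /and3P[_ /hasPn notin_c _]; apply: notin_c.
have ce : prec c e.
  case/orP: (preceq_chain cd ed) => [| ec]; last by rewrite mem_chain ec in e_notin_c.
  rewrite /preceq; have [ce | //] := eqVneq c e.
  by rewrite -ce mem_chain preceq_refl in e_notin_c.
have c_top_e : c \in lam (top e).
  by apply: mem_top_prec cx (tree_trans (preceq_top ed) (top_min dx)) _; rewrite /preceq ce orbT.
by move: (p_admissible ce c_top_e); rewrite pce eqxx.
Qed.

Lemma hom_pebbling s (t : (ar s).-tuple A) : R t -> PRel (@R s) (map_tuple pebbling t).
Proof.
move=> Rt; apply/andP; split; [apply/andP; split|].
- apply/forallP => i; apply/forallP => j; rewrite !tnth_map !ne_list_pebbling.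
  have [x [_ _ comparable]] := related_comparable Rt (mem_tnth i t) (mem_tnth j t).
  by case/orP: comparable => /prefix_chain/(prefix_map move_of) ->; rewrite ?orbT.
- apply/forallP => i; apply/forallP => j; apply/implyP.
  rewrite !tnth_map !ne_list_pebbling last_peb_pebbling size_map -map_drop -map_comp.
  have move_ofK : cancel move_of snd by [].
  move=> /(prefix_map snd); rewrite !(mapK move_ofK).
  have [x [cx dx _]] := related_comparable Rt (mem_tnth i t) (mem_tnth j t).
  exact: pebble_kept cx dx.
- suff -> : map_tuple (@eps k A) (map_tuple pebbling t) = t by [].
  by apply: eq_from_tnth => i; rewrite !tnth_map eps_pebbling.
Qed.

Lemma pebbling_coalgebra : is_Pk_coalgebra R pebbling.
Proof. by split; [exact: hom_pebbling | split; [exact: delta_pebbling | exact: eps_pebbling]]. Qed.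

End DecompositionCoalgebra.

Lemma ex_minimal_nat (P : nat -> Prop) n : P n -> exists m, P m /\ forall j, P j -> m <= j.
Proof.
elim/ltn_ind: n => n IH Pn.
have [[j [lt_jn Pj]] | no_smaller] := classic (exists j, j < n /\ P j); first exact: IH Pj.
exists n; split=> // j Pj; rewrite leqNgt; apply/negP => lt_jn.
by apply: no_smaller; exists j.
Qed.

Lemma trivial_tree_dec (S : Type) (ar : S -> nat) (A : finType)
    (R : forall s : S, pred ((ar s).-tuple A)) :
  tree_dec R ((fun _ _ => true) : rel unit) (fun _ => [set: A]).
Proof.
split; first by split=> //; split; [case; case | split=> //; split=> //; exists tt].
split; first by move=> a; exists tt; rewrite inE.
by split=> [a b _ | *]; [exists tt | ]; rewrite !inE.
Qed.

Theorem mainTheorem14 (S : Type) (ar : S -> nat) (A : finType)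
    (R : forall s : S, pred ((ar s).-tuple A)) :
  0 < #|A| ->
  exists n : nat, is_tw R n /\ is_kappaP R n.+1.
Proof.
move=> _.
pose decomposable w := exists (T : finType) (le : rel T) (lam : T -> {set A}),
  tree_dec R le lam /\ width lam = w.
have [w [[T [le [lam [dec width_w]]]] w_min]] :
    exists w, decomposable w /\ forall j, decomposable j -> w <= j.
  apply: ex_minimal_nat; exists unit, (fun _ _ => true), (fun _ => [set: A]).
  by split; first exact: trivial_tree_dec.
exists w; split.
  by split=> [|T' le' lam' dec']; [exists T, le, lam | apply: w_min; exists T', le', lam'].
split=> //; split.
  have [[_ [_ [_ [[root le_root] _]]]] _] := dec.
  have card_bag x : #|lam x| <= w.+1.
    by have := @leq_bigmax _ (fun y => #|lam y|) x; rewrite -width_w /width; lia.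
  have [p p_admissible] := exists_admissible root dec card_bag (ltn0Sn w).
  by exists (pebbling le lam root p); apply: pebbling_coalgebra.
move=> m m_gt0 [alpha alpha_coalg].
have : decomposable (width (live_bag alpha)).
  by exists (option A), (play_le alpha), (live_bag alpha); split; first exact: live_tree_dec.
by move/w_min; have := width_live_bag alpha_coalg; lia.
Qed.
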